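(* Let $G=(V,E)$ be a finite weakly connected directed graph with $V=\{1,\dots,n\}$, nonnegative adjacency matrix $W$ in which every row has a positive entry, $D=\operatorname{diag}(d_1,\dots,d_n)$ with $d_i=\sum_j W_{ij}$, and $P=D^{-1}W$. Let $A=\operatorname{diag}(\alpha_1,\dots,\alpha_n)$ with $\alpha_i\in[0,1)$ for all $i$, and let $v$ be a probability vector on $V$. Then the Location-of-Restart Personalized PageRank $\rho(v)$ (a row vector) satisfies $$\rho(v)=v^T[I-AP]^{-1}[I-A].$$
   Context: Consider the random walk $(X_t)_{t\ge0}$ on $V$ in which, at each step from the current node $i$, with probability $1-\alpha_i$ a restart occurs at time $t+1$ and $X_{t+1}$ is drawn from $v$, and otherwise $X_{t+1}=j$ with probability $P_{ij}$; its transition matrix is $AP+(I-A)\underline{1}v^T$, with $\underline{1}$ the all-ones column vector. The Location-of-Restart Personalized PageRank is $\rho_j(v)=\lim_{t\to\infty}\mathbb P(X_t=j\mid \text{a restart occurs at time } t+1)$, i.e. the long-run distribution of the node occupied just before a restart. *)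

From HB Require Import structures.
From mathcomp Require Import all_boot all_order all_algebra.
From mathcomp Require Import all_classical all_reals topology normedtype sequences.
Set Implicit Arguments. Unset Strict Implicit. Unset Printing Implicit Defensive.
Import Order.TTheory GRing.Theory Num.Theory.
Local Open Scope ring_scope.

Section LRPPR.
Variables (R : realType) (n : nat).

Definition weakly_connected (W : 'M[R]_n) : Prop :=
  forall i j : 'I_n, connect (fun a b : 'I_n => (0 < W a b) || (0 < W b a)) i j.

Definition degmx (W : 'M[R]_n) : 'M[R]_n := diag_mx (\row_i \sum_j W i j).
Definition rwmx (W : 'M[R]_n) : 'M[R]_n := invmx (degmx W) *m W.
Definition alphamx (alpha : 'I_n -> R) : 'M[R]_n := diag_mx (\row_i alpha i).

Definition is_prob_col (v : 'cV[R]_n) : Prop :=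
  (forall i, 0 <= v i 0) /\ \sum_i v i 0 = 1.
Definition is_prob_row (mu : 'rV[R]_n) : Prop :=
  (forall i, 0 <= mu 0 i) /\ \sum_i mu 0 i = 1.

Definition restart_trans (W : 'M[R]_n) (alpha : 'I_n -> R) (v : 'cV[R]_n)
  : 'M[R]_n :=
  alphamx alpha *m rwmx W + (1%:M - alphamx alpha) *m const_mx 1 *m v^T.

Definition law_at W alpha v (mu : 'rV[R]_n) (t : nat) : 'rV[R]_n :=
  mu *m (restart_trans W alpha v) ^+ t.

(* P(X_t = j, restart at time t+1) : the restart decision at step t is taken
   with probability 1 - alpha_{X_t}, independently of the past *)
Definition joint_restart W alpha v mu (t : nat) (j : 'I_n) : R :=
  law_at W alpha v mu t 0 j * (1 - alpha j).

Definition cond_restart W alpha v mu (t : nat) (j : 'I_n) : R :=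
  joint_restart W alpha v mu t j / \sum_i joint_restart W alpha v mu t i.

End LRPPR.

From HB Require Import structures.
From mathcomp Require Import all_boot all_order all_algebra.
From mathcomp Require Import all_classical all_reals topology normedtype sequences.
From mathcomp Require Import ring.
Set Implicit Arguments. Unset Strict Implicit. Unset Printing Implicit Defensive.
Import numFieldNormedType.Exports.
Import Order.TTheory GRing.Theory Num.Theory.
Local Open Scope ring_scope.
Local Open Scope classical_set_scope.

(* With [a := max_i alpha_i < 1], the walk restarts from every state with
   probability at least [1 - a], so every row of its transition matrix [T]
   dominates [(1 - a) v^T]. This Doeblin minorization makes [T] a contraction
   of ratio [a] in the l1 norm on zero-sum row vectors, so the law of [X_t]
   converges geometrically to the unique invariant law. Since [A P] has row
   sums at most [a], [I - A P] is invertible, and [pi := v^T (I - A P)^-1] is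
   invariant with [pi (I - A) 1 = v^T 1 = 1]. Hence
   [P(X_t = j, restart) / P(restart)] tends to [pi_j (1 - alpha_j)], which is
   the [j]-th entry of [v^T (I - A P)^-1 (I - A)]. *)

Section RowNorm1.
Variables (R : realFieldType) (n : nat).
Implicit Types (T M : 'M[R]_n) (x : 'rV[R]_n) (w : 'cV[R]_n).

Definition rnorm1 x : R := \sum_i `|x 0 i|.

Lemma rnorm1_ge0 x : 0 <= rnorm1 x.
Proof. exact: sumr_ge0. Qed.

Lemma rnorm1_ge_entry x i : `|x 0 i| <= rnorm1 x.
Proof. by rewrite /rnorm1 (bigD1 i) //= lerDl sumr_ge0. Qed.

Lemma rnorm1_eq0 x : rnorm1 x = 0 -> x = 0.
Proof.
move=> /psumr_eq0P x0; apply/matrixP => i j.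
by rewrite ord1 mxE; apply/normr0_eq0/x0.
Qed.

Lemma sum_mulmx_row_stochastic T x :
  (forall i, \sum_j T i j = 1) -> \sum_j (x *m T) 0 j = \sum_i x 0 i.
Proof.
move=> T1; under eq_bigr do rewrite mxE.
by rewrite exchange_big; apply: eq_bigr => i _; rewrite -mulr_sumr T1 mulr1.
Qed.

Lemma rnorm1_mulmx_le M x a :
  (forall i j, 0 <= M i j) -> (forall i, \sum_j M i j <= a) ->
  rnorm1 (x *m M) <= a * rnorm1 x.
Proof.
move=> M0 Ma; apply: (@le_trans _ _ (\sum_j \sum_i `|x 0 i| * M i j)).
  apply: ler_sum => j _; rewrite mxE; apply: (le_trans (ler_norm_sum _ _ _)).
  by apply: ler_sum => i _; rewrite normrM (ger0_norm (M0 i j)).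
rewrite exchange_big /rnorm1 mulr_sumr; apply: ler_sum => i _.
by rewrite -mulr_sumr mulrC ler_wpM2r.
Qed.

(* Doeblin's contraction: subtracting the common part [c w] of all rows of [T]
   does not change [x *m T] when [x] has zero sum. *)
Lemma rnorm1_mulmx_contract T w c x :
  (forall i j, c * w j 0 <= T i j) -> (forall i, \sum_j T i j = 1) ->
  \sum_j w j 0 = 1 -> \sum_i x 0 i = 0 ->
  rnorm1 (x *m T) <= (1 - c) * rnorm1 x.
Proof.
move=> Tc T1 w1 x0; pose M := \matrix_(i, j) (T i j - c * w j 0).
have -> : x *m T = x *m M.
  apply/rowP => j; rewrite !mxE; under [RHS]eq_bigr do rewrite mxE mulrBr.
  by rewrite sumrB -mulr_suml x0 mul0r subr0.
apply: rnorm1_mulmx_le => [i j|i]; first by rewrite mxE subr_ge0.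
under eq_bigr do rewrite mxE.
by rewrite sumrB T1 -mulr_sumr w1 mulr1.
Qed.

Lemma rnorm1_mulmx_expr_contract T w c x t :
  (forall i j, c * w j 0 <= T i j) -> (forall i, \sum_j T i j = 1) ->
  \sum_j w j 0 = 1 -> c <= 1 -> \sum_i x 0 i = 0 ->
  rnorm1 (x *m T ^+ t) <= (1 - c) ^+ t * rnorm1 x.
Proof.
move=> Tc T1 w1 c1; elim: t x => [|t IHt] x x0; first by rewrite expr0 mulmx1 mul1r.
rewrite exprS mulmxA exprSr -mulrA.
apply: (le_trans (IHt _ _)); first by rewrite sum_mulmx_row_stochastic.
by rewrite ler_wpM2l ?exprn_ge0 ?subr_ge0 //; apply: rnorm1_mulmx_contract Tc T1 w1 x0.
Qed.

Lemma unitmx_1_sub_substochastic M a :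
  (forall i j, 0 <= M i j) -> (forall i, \sum_j M i j <= a) -> a < 1 ->
  1%:M - M \in unitmx.
Proof.
move=> M0 Ma a1; rewrite -row_free_unit; apply: inj_row_free => x xM0.
have xM : x *m M = x.
  by apply/eqP; rewrite -subr_eq0 -opprB -{1}[x]mulmx1 -mulmxBr xM0 oppr0.
apply: rnorm1_eq0; apply/eqP; rewrite eq_le rnorm1_ge0 andbT.
have := rnorm1_mulmx_le x M0 Ma; rewrite xM => xa.
have : (1 - a) * rnorm1 x <= 0 by rewrite mulrBl mul1r subr_le0.
by rewrite pmulr_rle0 // subr_gt0.
Qed.

End RowNorm1.

Section DoeblinLimit.
Variables (R : realType) (n : nat).

Lemma cvg_of_normB_le (f e : nat -> R) (l : R) :
  e @ \oo --> 0 -> (forall t, `|f t - l| <= e t) -> f @ \oo --> l.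
Proof.
move=> e0 fe; apply/cvgrPdist_le => eps eps0.
near=> t; rewrite distrC (le_trans (fe t)) //; near: t.
move/cvgrPdist_le: e0 => /(_ eps eps0); apply: filterS => t.
by rewrite sub0r normrN; apply: le_trans; rewrite ler_norm.
Unshelve. all: by end_near.
Qed.

Lemma cvg_divr_rescaled (Z : R) (f g : nat -> R) (a b : R) :
  (fun t => Z * f t) @ \oo --> a -> (fun t => Z * g t) @ \oo --> b -> b != 0 ->
  (fun t => f t / g t) @ \oo --> a / b.
Proof.
move=> fa gb b0; have Z0 : Z != 0.
  apply: contra_neq b0 => Z0.
  have g0 : (fun t => Z * g t) @ \oo --> (0 : R).
    by rewrite Z0; under eq_fun do rewrite mul0r; exact: cvg_cst.
  exact: (cvg_unique (@Rhausdorff R) gb g0).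
have -> : (fun t => f t / g t) = (fun t => (Z * f t) / (Z * g t)).
  by apply/funext => t; rewrite invfM mulrACA mulfV // mul1r.
exact: cvgM fa (cvgV b0 gb).
Qed.

Lemma cvg_law_doeblin (T : 'M[R]_n) (w : 'cV[R]_n) (c : R) (pi mu : 'rV[R]_n)
    (j : 'I_n) :
  (forall i j, c * w j 0 <= T i j) -> (forall i, \sum_j T i j = 1) ->
  \sum_j w j 0 = 1 -> 0 < c <= 1 -> pi *m T = pi -> \sum_i mu 0 i = 1 ->
  (fun t => (\sum_i pi 0 i) * (mu *m T ^+ t) 0 j) @ \oo --> pi 0 j.
Proof.
move=> Tc T1 w1 /andP[c0 c1] piT mu1; set Z := \sum_i pi 0 i.
pose x := Z *: mu - pi.
have x0 : \sum_i x 0 i = 0.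
  by under eq_bigr do rewrite !mxE; rewrite sumrB -mulr_sumr mu1 mulr1 subrr.
have piTt t : pi *m T ^+ t = pi.
  by elim: t => [|t IHt]; rewrite ?expr0 ?mulmx1 // exprSr mulmxA IHt piT.
apply: (@cvg_of_normB_le _ (fun t => (1 - c) ^+ t * rnorm1 x)) => [|t].
  rewrite -(mul0r (rnorm1 x)); apply: cvgM (cvg_cst _); apply: cvg_expr.
  by rewrite ger0_norm ?subr_ge0 // ltrBlDl ltrDr.
have -> : Z * (mu *m T ^+ t) 0 j - pi 0 j = (x *m T ^+ t) 0 j.
  by rewrite mulmxBl -scalemxAl piTt !mxE.
exact: le_trans (rnorm1_ge_entry _ _) (rnorm1_mulmx_expr_contract t Tc T1 w1 c1 x0).
Qed.

End DoeblinLimit.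

Lemma invmx_diag (F : fieldType) (n : nat) (d : 'rV[F]_n) :
  (forall i, d 0 i != 0) -> invmx (diag_mx d) = diag_mx (\row_i (d 0 i)^-1).
Proof.
move=> d0; have dV : diag_mx (\row_i (d 0 i)^-1) *m diag_mx d = 1%:M.
  rewrite mulmx_diag -diag_const_mx; congr diag_mx.
  by apply/rowP => i; rewrite !mxE mulVf.
have [_ /mulVmx Vd] := mulmx1_unit dV.
by rewrite -[invmx _]mulmx1 -(mulmx1C dV) mulmxA Vd mul1mx.
Qed.

Section RestartWalk.
Variables (R : realType) (n : nat) (W : 'M[R]_n) (alpha : 'I_n -> R).
Variable v : 'cV[R]_n.
Hypotheses (W_ge0 : forall i j, 0 <= W i j) (W_row : forall i, exists j, 0 < W i j).
Hypotheses (alpha_ge0 : forall i, 0 <= alpha i) (alpha_lt1 : forall i, alpha i < 1).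
Hypothesis v_prob : is_prob_col v.

Local Notation P := (rwmx W).
Local Notation A := (alphamx alpha).
Local Notation T := (restart_trans W alpha v).

Lemma degree_gt0 i : 0 < \sum_j W i j.
Proof.
have [j Wij] := W_row i.
by rewrite (bigD1 j) //= ltr_pwDl // sumr_ge0.
Qed.

Lemma rwmxE i j : P i j = (\sum_k W i k)^-1 * W i j.
Proof.
rewrite /rwmx /degmx invmx_diag => [|k]; last by rewrite mxE gt_eqF ?degree_gt0.
by rewrite mul_diag_mx !mxE.
Qed.

Lemma rwmx_ge0 i j : 0 <= P i j.
Proof. by rewrite rwmxE mulr_ge0 ?W_ge0 // invr_ge0 ltW ?degree_gt0. Qed.

Lemma rwmx_row_sum i : \sum_j P i j = 1.
Proof.
under eq_bigr do rewrite rwmxE.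
by rewrite -mulr_sumr mulVf // gt_eqF ?degree_gt0.
Qed.

Lemma alphamx_mulE m (M : 'M[R]_(n, m)) i j : (A *m M) i j = alpha i * M i j.
Proof. by rewrite mul_diag_mx !mxE. Qed.

Lemma restart_colE i : ((1%:M - A) *m (const_mx 1 : 'cV_n)) i 0 = 1 - alpha i.
Proof.
have Ac := alphamx_mulE (const_mx 1 : 'cV_n) i 0; rewrite !mxE mulr1 in Ac.
by rewrite mulmxBl mul1mx !mxE Ac.
Qed.

Lemma restart_transE i j : T i j = alpha i * P i j + (1 - alpha i) * v j 0.
Proof.
rewrite /restart_trans mxE alphamx_mulE; congr (_ + _).
by rewrite mxE big_ord1 restart_colE mxE.
Qed.

Lemma restart_trans_row_sum i : \sum_j T i j = 1.
Proof.
have [_ v1] := v_prob; under eq_bigr do rewrite restart_transE.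
by rewrite big_split /= -!mulr_sumr rwmx_row_sum v1 !mulr1 subrKC.
Qed.

Definition alpha_max : R := \big[Order.max/0]_i alpha i.

Lemma alpha_max_lt1 : alpha_max < 1.
Proof. exact: bigmax_lt. Qed.

Lemma restart_trans_minor i j : (1 - alpha_max) * v j 0 <= T i j.
Proof.
have [v0 _] := v_prob; rewrite restart_transE -subr_ge0.
have -> : alpha i * P i j + (1 - alpha i) * v j 0 - (1 - alpha_max) * v j 0
    = alpha i * P i j + (alpha_max - alpha i) * v j 0 by ring.
by rewrite addr_ge0 ?mulr_ge0 ?rwmx_ge0 ?subr_ge0 ?le_bigmax.
Qed.

Lemma unitmx_1_sub_alphamx_rwmx : 1%:M - A *m P \in unitmx.
Proof.
apply: (@unitmx_1_sub_substochastic _ _ _ alpha_max _ _ alpha_max_lt1) => i.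
  by move=> j; rewrite alphamx_mulE mulr_ge0 ?rwmx_ge0.
under eq_bigr do rewrite alphamx_mulE.
by rewrite -mulr_sumr rwmx_row_sum mulr1 le_bigmax.
Qed.

Lemma rwmx_mul_ones : P *m const_mx 1 = const_mx 1 :> 'cV_n.
Proof.
apply/colP => i; rewrite [LHS]mxE [RHS]mxE -[RHS](rwmx_row_sum i).
by apply: eq_bigr => j _; rewrite [const_mx _ _ _]mxE mulr1.
Qed.

(* [v^T (I - A P)^-1] is an invariant measure of the restart walk, normalised
   by its mass at restart times rather than by its total mass. *)
Definition restart_measure : 'rV[R]_n := v^T *m invmx (1%:M - A *m P).

Lemma restart_measure_restart_col :
  restart_measure *m ((1%:M - A) *m const_mx 1) = 1%:M.
Proof.
have [_ v1] := v_prob.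
have -> : (1%:M - A) *m const_mx 1 = (1%:M - A *m P) *m const_mx 1 :> 'cV_n.
  by rewrite !mulmxBl -mulmxA rwmx_mul_ones.
rewrite mulmxA mulmxKV ?unitmx_1_sub_alphamx_rwmx //.
apply/rowP => i; rewrite ord1 [LHS]mxE [RHS]mxE mulr1n -[RHS]v1.
by apply: eq_bigr => j _; rewrite !mxE mulr1.
Qed.

Lemma restart_measure_invariant : restart_measure *m T = restart_measure.
Proof.
rewrite /restart_trans mulmxDr !mulmxA -(mulmxA _ _ (const_mx 1)).
rewrite restart_measure_restart_col mul1mx.
have : restart_measure *m (1%:M - A *m P) = v^T.
  by rewrite mulmxKV ?unitmx_1_sub_alphamx_rwmx.
by rewrite mulmxBr mulmx1 mulmxA => <-; rewrite -!mulmxA subrKC.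
Qed.

Lemma restart_measure_restart_mass :
  \sum_i restart_measure 0 i * (1 - alpha i) = 1.
Proof.
have mass : (restart_measure *m ((1%:M - A) *m (const_mx 1 : 'cV_n))) 0 0 = 1.
  by rewrite restart_measure_restart_col mxE.
by rewrite -[RHS]mass [RHS]mxE; apply: eq_bigr => i _; rewrite restart_colE.
Qed.

End RestartWalk.

Theorem theorem3 (R : realType) (n : nat) (W : 'M[R]_n) (alpha : 'I_n -> R)
  (v : 'cV[R]_n) :
  weakly_connected W ->
  (forall i j, 0 <= W i j) ->
  (forall i, exists j, 0 < W i j) ->
  (forall i, 0 <= alpha i < 1) ->
  is_prob_col v ->
  (1%:M - alphamx alpha *m rwmx W) \in unitmx /\
  forall mu : 'rV[R]_n, is_prob_row mu ->
  forall j : 'I_n,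
    (fun t : nat => cond_restart W alpha v mu t j) @ \oo -->
    ((v^T *m invmx (1%:M - alphamx alpha *m rwmx W) *m (1%:M - alphamx alpha)) 0 j : R)%R.
Proof.
move=> _ W_ge0 W_row alpha01 v_prob.
have alpha_ge0 i : 0 <= alpha i by case/andP: (alpha01 i).
have alpha_lt1 i : alpha i < 1 by case/andP: (alpha01 i).
split; first exact: unitmx_1_sub_alphamx_rwmx.
move=> mu [_ mu1] j; set pi := restart_measure W alpha v.
have mass := restart_measure_restart_mass W_ge0 W_row alpha_ge0 alpha_lt1 v_prob.
have law_cvg k : (fun t => (\sum_i pi 0 i) * law_at W alpha v mu t 0 k) @ \oo --> pi 0 k.
  apply: cvg_law_doeblin (restart_trans_minor W_ge0 W_row alpha_ge0 v_prob)
    (restart_trans_row_sum alpha W_ge0 W_row v_prob) v_prob.2 _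
    (restart_measure_invariant W_ge0 W_row alpha_ge0 alpha_lt1 v_prob) mu1.
  by rewrite subr_gt0 alpha_max_lt1 // lerBlDr lerDl bigmax_ge_id.
have weighted_cvg k : (fun t => (\sum_i pi 0 i) * joint_restart W alpha v mu t k)
    @ \oo --> pi 0 k * (1 - alpha k).
  by under eq_fun do rewrite mulrA; exact: cvgM (law_cvg k) (cvg_cst _).
have -> : (v^T *m invmx (1%:M - alphamx alpha *m rwmx W) *m (1%:M - alphamx alpha)) 0 j
    = pi 0 j * (1 - alpha j) / \sum_i pi 0 i * (1 - alpha i).
  by rewrite mass divr1 mulmxBr mulmx1 mul_mx_diag !mxE mulrBr mulr1.
rewrite /cond_restart; apply: cvg_divr_rescaled (weighted_cvg j) _ _.
  under eq_fun do rewrite mulr_sumr.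
  by apply: cvg_big => [|i _]; [exact: add_continuous | exact: weighted_cvg].
by rewrite mass oner_neq0.
Qed.
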